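(* Let $(M,\widetilde B)$ be a root of unity quantum seed satisfying condition (Coprime). Then for every $k\in\mathrm{ex}$, $$M(e_k)^\ell\big(\mu_k(M)(e_k)\big)^\ell=\prod_{b_{ik}>0}\big(M(e_i)^\ell\big)^{b_{ik}}+\prod_{b_{ik}<0}\big(M(e_i)^\ell\big)^{-b_{ik}}.$$
   Context: Let $\ell$ be a positive integer, $\mathbb Z_\ell=\mathbb Z/\ell\mathbb Z$, $\varepsilon^{1/2}\in\mathbb C$ a primitive $\ell$-th root of unity, $\mathcal A^{1/2}_\varepsilon=\mathbb Z[\varepsilon^{1/2}]$, $\varepsilon^{a/2}=(\varepsilon^{1/2})^a$ for $a\in\mathbb Z_\ell$; $\overline C$ is the reduction mod $\ell$ of an integer matrix $C$; $e_1,\dots,e_N$ is the standard basis of $\mathbb Z^N$. For a skew-symmetric bilinear form $\Lambda:\mathbb Z^N\times\mathbb Z^N\to\mathbb Z_\ell$ with matrix $(\lambda_{ij})$, $\mathcal T_\varepsilon(\Lambda)$ is the $\mathcal A^{1/2}_\varepsilon$-algebra with basis $\{X^f\}_{f\in\mathbb Z^N}$ and $X^fX^g=\varepsilon^{\Lambda(f,g)/2}X^{f+g}$. A root of unity toric frame of a division algebra $\mathcal F$ over $\mathbb Q(\varepsilon^{1/2})$ is a map $M:\mathbb Z^N\to\mathcal F$ such that for some (unique) skew-symmetric $\Lambda=:\Lambda_M$ there is an injective $\mathcal A^{1/2}_\varepsilon$-algebra map $\phi:\mathcal T_\varepsilon(\Lambda)\to\mathcal F$, $\phi(X^f)=M(f)$,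 with $\mathcal F$ the skew field of fractions of its image. Fix $\mathrm{ex}\subseteq[1,N]$. An exchange matrix $\widetilde B=(b_{ij})$ is an integer matrix with rows indexed by $[1,N]$, columns by $\mathrm{ex}$, principal part $B$, $k$-th column $b^k\in\mathbb Z^N$. $(\Lambda,\widetilde B)$ is $\ell$-compatible if there is $D=\mathrm{diag}(d_j)_{j\in\mathrm{ex}}$, $d_j\in\mathbb Z_{>0}$, with $DB$ skew-symmetric and $\sum_k\overline b_{kj}\lambda_{ki}=\delta_{ij}\overline d_j$ in $\mathbb Z_\ell$ for all $i\in[1,N]$, $j\in\mathrm{ex}$. A root of unity quantum seed is $(M,\widetilde B)$ with $(\Lambda_M,\widetilde B)$ $\ell$-compatible. Condition (Coprime): $\ell$ is odd and coprime to all $d_k$, $k\in\mathrm{ex}$. For $b\in\mathbb Z^N$, $[b]_\pm$ keeps the entries $b_i$ with $\pm b_i\ge0$ and sets the others to $0$. The mutated frame satisfies $\mu_k(M)(e_k)=M(-e_k+[b^k]_+)+M(-e_k-[b^k]_-)$. *)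

From HB Require Import structures.
From mathcomp Require Import all_boot all_order all_algebra all_field.
Set Implicit Arguments. Unset Strict Implicit. Unset Printing Implicit Defensive.
Import Order.TTheory GRing.Theory Num.Theory.
Local Open Scope ring_scope.

(* Vectors of Z^N are integer row vectors 'rV[int]_N; indices [1,N] are 'I_N. *)

Definition evec (N : nat) (i : 'I_N) : 'rV[int]_N := delta_mx 0 i.

Definition pos_part (N : nat) (b : 'rV[int]_N) : 'rV[int]_N :=
  \row_i (if 0 <= b 0 i then b 0 i else 0).
Definition neg_part (N : nat) (b : 'rV[int]_N) : 'rV[int]_N :=
  \row_i (if b 0 i <= 0 then b 0 i else 0).

(* k-th column b^k of an exchange matrix (rows [1,N]; only columns in ex are used) *)
Definition bcol (N : nat) (B : 'M[int]_N) (k : 'I_N) : 'rV[int]_N := \row_i B i k.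

(* Bilinear form with (integer representatives of the) matrix lam:
   Lambda(f,g) = sum_{i,j} f_i lam_ij g_j, read modulo l. *)
Definition formL (N : nat) (lam : 'M[int]_N) (f g : 'rV[int]_N) : int :=
  (f *m lam *m g^T) 0 0.

Definition skew_mod (l N : nat) (lam : 'M[int]_N) : Prop :=
  forall i j, (l%:Z %| lam i j + lam j i)%Z.

(* a lies in (the image of) A^{1/2}_eps = Z[q] *)
Definition in_Aq (K : fieldType) (q : K) (a : K) : Prop :=
  exists p : {poly int}, a = (map_poly (fun z : int => z%:~R) p).[q].

(* Root of unity toric frame M of the division algebra F with form lam:
   the Z[q]-linear map phi : T_eps(Lambda) -> F, X^f |-> M f, is a unital
   algebra map (M 0 = 1 and M f M g = q^{Lambda(f,g)} M (f+g)), it is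
   injective ({M f} linearly independent over Z[q]), and F is the skew field
   of fractions of its image (the only division subring of F containing the
   image of phi is F itself). *)
Definition toric_frame (K : fieldType) (F : unitAlgType K) (q : K) (l N : nat)
  (M : 'rV[int]_N -> F) (lam : 'M[int]_N) : Prop :=
  [/\ skew_mod l lam,
      M 0 = 1,
      (forall f g, M f * M g = (q ^ formL lam f g) *: M (f + g)),
      (forall (s : seq 'rV[int]_N) (c : 'rV[int]_N -> K),
          uniq s -> (forall f, in_Aq q (c f)) ->
          \sum_(f <- s) c f *: M f = 0 -> forall f, f \in s -> c f = 0) &
      (forall S : F -> Prop,
          S 0 -> S 1 ->
          (forall x y, S x -> S y -> S (x + y)) ->
          (forall x, S x -> S (- x)) ->
          (forall x y, S x -> S y -> S (x * y)) ->
          (forall x, S x -> x != 0 -> S x^-1) ->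
          (forall a, in_Aq q a -> S (a *: 1)) ->
          (forall f, S (M f)) ->
          forall x, S x)].

(* (lam, B) is l-compatible, witnessed by D = diag(d_j)_{j in ex} *)
Definition compatible_with (l N : nat) (ex : {set 'I_N}) (lam B : 'M[int]_N)
  (d : 'I_N -> nat) : Prop :=
  [/\ (forall j, j \in ex -> (0 < d j)%N),
      (forall i j, i \in ex -> j \in ex ->
          (d i)%:Z * B i j = - ((d j)%:Z * B j i)) &
      (forall i j, j \in ex ->
          (l%:Z %| \sum_(k < N) B k j * lam k i - (i == j)%:R * (d j)%:Z)%Z)].

Definition coprime_cond (l N : nat) (ex : {set 'I_N}) (d : 'I_N -> nat) : Prop :=
  odd l /\ (forall k, k \in ex -> coprime l (d k)).

Definition mut_ek (K : fieldType) (F : unitAlgType K) (N : nat)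
  (M : 'rV[int]_N -> F) (B : 'M[int]_N) (k : 'I_N) : F :=
  M (- evec k + pos_part (bcol B k)) + M (- evec k - neg_part (bcol B k)).

(* Write Y = M(-e_k + [b]_+) with b = b^k, and let Z be M(-b) rescaled by a power of
   q = eps^(1/2) so that the two terms of mu_k(M)(e_k) are Y and YZ.  Compatibility
   gives ZY = w YZ with w = q^(2 d_k), a primitive l-th root of unity by (Coprime).
   For such w and odd l the q-binomial expansion of (Y(1 + Z))^l collapses to
   Y^l (1 + Z^l).  Finally M is multiplicative on l-multiples of lattice vectors, since
   l divides the form there, so both sides become M(l [b]_+) + M(-l [b]_-). *)
From HB Require Import structures.
From mathcomp Require Import all_boot all_order all_algebra all_field.
From mathcomp Require Import ring.
Import Order.TTheory GRing.Theory Num.Theory.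
Local Open Scope ring_scope.
Set Implicit Arguments. Unset Strict Implicit.

Section SkewCommuting.

Variables (K : fieldType) (F : algType K).

Lemma comm_1DZ (Z : F) (a b : K) : GRing.comm (1 + a *: Z) (1 + b *: Z).
Proof.
rewrite /GRing.comm !mulrDl !mulrDr !mul1r !mulr1 -!scalerAl -!scalerAr.
by rewrite !scalerA mulrC !addrA (addrAC 1 (a *: Z)).
Qed.

Lemma expr_mul1D_skew (A Z : F) (w : K) n :
  Z * A = w *: (A * Z) ->
  (A * (1 + Z)) ^+ n = A ^+ n * \prod_(i < n) (1 + w ^+ i *: Z).
Proof.
move=> ZA.
have ZAn m : Z * A ^+ m = w ^+ m *: (A ^+ m * Z).
  elim: m => [|m IHm]; first by rewrite !expr0 mulr1 mul1r scale1r.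
  rewrite !exprSr mulrA IHm -scalerAl -[A ^+ m * Z * A]mulrA ZA -scalerAr.
  by rewrite scalerA mulrA.
have D1ZAn m : (1 + Z) * A ^+ m = A ^+ m * (1 + w ^+ m *: Z).
  by rewrite mulrDl mul1r ZAn mulrDr mulr1 scalerAr.
elim: n => [|n IHn]; first by rewrite !expr0 big_ord0 mulr1.
rewrite exprS IHn -mulrA (mulrA (1 + Z)) D1ZAn big_ord_recr /= -!mulrA exprS.
rewrite -!mulrA; congr (_ * (_ * _)).
by apply: commr_prod => i _; apply: comm_1DZ.
Qed.

Variable l : nat.
Hypothesis l_odd : odd l.

Lemma prod_addZ_prim_root (z : K) (Z : F) :
  l.-primitive_root z -> \prod_(i < l) ((z ^+ i)%:A + Z) = 1 + Z ^+ l.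
Proof.
move=> z_prim.
have horner_factor (c : K) : horner_alg (- Z) ('X - c%:P) = - (c%:A + Z).
  by rewrite rmorphB /= horner_algX horner_algC opprD addrC.
have := congr1 (horner_alg (- Z)) (factor_Xn_sub_1 z_prim).
rewrite rmorph_prod rmorphB rmorphXn rmorph1 /= horner_algX big_mkord.
rewrite (eq_bigr (fun i : 'I_l => - ((z ^+ i)%:A + Z))); last by move=> i _; apply: horner_factor.
have sign_l : (-1) ^+ l = -1 :> F by rewrite -signr_odd l_odd expr1.
rewrite prodrN cardT size_enum_ord sign_l exprNn sign_l !mulN1r => /eqP.
by rewrite -opprD eqr_opp addrC => /eqP.
Qed.

(* Writing 1 + w^i Z = w^i (w^-i + Z), the scalars multiply to w^(l(l-1)/2) = 1. *)
Lemma prod_1DZ_prim_root (w : K) (Z : F) :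
  l.-primitive_root w -> \prod_(i < l) (1 + w ^+ i *: Z) = 1 + Z ^+ l.
Proof.
move=> w_prim; have l_gt0 := prim_order_gt0 w_prim.
have wl : w ^+ l = 1 := prim_expr_order w_prim.
set z := w ^+ l.-1.
have z_prim : l.-primitive_root z.
  rewrite prim_root_exp_coprime // -{2}(prednK l_gt0); exact: coprimenS.
have wz i : w ^+ i * z ^+ i = 1 by rewrite -exprMn -exprS prednK // wl expr1n.
under eq_bigr => i _ do rewrite -[1](scale1r 1) -(wz i) -scalerA -scalerDr.
rewrite scaler_prod prodrXr -(big_mkord xpredT id) bin2_sum bin2odd //.
by rewrite exprM wl expr1n scale1r prod_addZ_prim_root.
Qed.

Lemma expr_mul1D_prim_root (A Z : F) (w : K) :
  l.-primitive_root w -> Z * A = w *: (A * Z) ->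
  (A * (1 + Z)) ^+ l = A ^+ l * (1 + Z ^+ l).
Proof. by move=> w_prim ZA; rewrite (expr_mul1D_skew _ ZA) prod_1DZ_prim_root. Qed.

End SkewCommuting.

Section Form.

Variables (l N : nat) (lam : 'M[int]_N).

Lemma formLE f g : formL lam f g = \sum_j (\sum_i f 0 i * lam i j) * g 0 j.
Proof. by rewrite /formL mxE; apply: eq_bigr => j _; rewrite !mxE. Qed.

Lemma formLE2 f g : formL lam f g = \sum_i \sum_j f 0 i * lam i j * g 0 j.
Proof. by rewrite formLE exchange_big; apply: eq_bigr => i _; rewrite big_distrl. Qed.

Lemma formLZl (a : int) f g : formL lam (a *: f) g = a * formL lam f g.
Proof. by rewrite /formL -!scalemxAl mxE. Qed.

Lemma formLNl f g : formL lam (- f) g = - formL lam f g.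
Proof. by rewrite -scaleN1r formLZl mulN1r. Qed.

Lemma formLZr (a : int) f g : formL lam f (a *: g) = a * formL lam f g.
Proof. by rewrite /formL linearZ /= -scalemxAr mxE. Qed.

Lemma formLNr f g : formL lam f (- g) = - formL lam f g.
Proof. by rewrite -scaleN1r formLZr mulN1r. Qed.

Lemma formL_bcol_dvd (B : 'M[int]_N) (k : 'I_N) (d : nat) x :
  (forall i, (l%:Z %| \sum_(m < N) B m k * lam m i - (i == k)%:R * d%:Z)%Z) ->
  (l%:Z %| formL lam (bcol B k) x - d%:Z * x 0%R k)%Z.
Proof.
move=> B_compat; rewrite formLE.
have -> : d%:Z * x 0 k = \sum_j (j == k)%:R * d%:Z * x 0 j.
  rewrite (bigD1 k) //= eqxx mul1r big1 ?addr0 // => j /negbTE ->.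
  by rewrite !mul0r.
rewrite -sumrB; apply: rpred_sum => j _; rewrite -mulrBl; apply: dvdz_mulr.
by under eq_bigr => i _ do rewrite mxE.
Qed.

Hypothesis lam_skew : skew_mod l lam.

Lemma formL_skew_dvd f g : (l%:Z %| formL lam f g + formL lam g f)%Z.
Proof.
rewrite !formLE2 [X in _ + X]exchange_big -big_split.
apply: rpred_sum => i _; rewrite -big_split; apply: rpred_sum => j _ /=.
have -> : f 0 i * lam i j * g 0 j + g 0 j * lam j i * f 0 i
        = f 0 i * g 0 j * (lam i j + lam j i) by ring.
exact: dvdz_mull.
Qed.

Lemma formL_self_dvd f : odd l -> (l%:Z %| formL lam f f)%Z.
Proof.
move=> l_odd; have := formL_skew_dvd f f.
by rewrite -mulr2n -mulr_natr Gauss_dvdzl // coprimezE /= coprimen2.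
Qed.

End Form.

Section ExchangeVectors.

Variables (N : nat) (B : 'M[int]_N) (k : 'I_N).

Lemma sum_evec_pos_part :
  \sum_(i < N | 0 < B i k) (`|B i k|%N)%:Z *: evec i = pos_part (bcol B k).
Proof.
apply/rowP => j; rewrite summxE !mxE big_mkcond (bigD1 j) //= big1 ?addr0.
  rewrite !mxE !eqxx mulr1.
  by case: ltrgtP => // Bjk; rewrite abszE gtr0_norm.
move=> i /negbTE ij; case: ifP => _ //.
by rewrite !mxE eq_sym ij andbF mulr0.
Qed.

Lemma sum_evec_neg_part :
  \sum_(i < N | B i k < 0) (`|B i k|%N)%:Z *: evec i = - neg_part (bcol B k).
Proof.
apply/rowP => j; rewrite summxE !mxE big_mkcond (bigD1 j) //= big1 ?addr0.
  rewrite !mxE !eqxx mulr1.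
  by case: ltrgtP => [Bjk|//|->]; rewrite ?abszE ?ltr0_norm ?oppr0.
move=> i /negbTE ij; case: ifP => _ //.
by rewrite !mxE eq_sym ij andbF mulr0.
Qed.

End ExchangeVectors.

Lemma add_pos_neg_part (N : nat) (b : 'rV[int]_N) : pos_part b + neg_part b = b.
Proof.
apply/rowP => j; rewrite !mxE.
by case: (ltrgtP (b 0 j) 0) => [_|_|->]; rewrite ?addr0 ?add0r.
Qed.

Section ToricFrame.

Variables (K : fieldType) (F : algType K) (q : K) (l N : nat).
Variables (M : 'rV[int]_N -> F) (lam : 'M[int]_N).
Hypotheses (q_prim : l.-primitive_root q) (l_odd : odd l) (lam_skew : skew_mod l lam).
Hypotheses (M0 : M 0 = 1) (MM : forall f g, M f * M g = q ^ formL lam f g *: M (f + g)).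

Let q_neq0 : q != 0.
Proof. by rewrite (prim_root_eq0 q_prim) -lt0n (prim_order_gt0 q_prim). Qed.

Lemma exprz_prim_root_dvd (z : int) : (l%:Z %| z)%Z -> q ^ z = 1.
Proof.
by case/dvdzP=> m ->; rewrite mulrC -exprz_exp -exprnP prim_expr_order // exp1rz.
Qed.

Lemma prim_root_exprz (z : int) (n : nat) :
  (l%:Z %| z - n%:Z)%Z -> coprime n l -> l.-primitive_root (q ^ z).
Proof.
move=> z_n n_coprime; rewrite -(subrK n%:Z z) expfzDr // exprz_prim_root_dvd //.
by rewrite mul1r -exprnP prim_root_exp_coprime // coprime_sym.
Qed.

Lemma frame_mul_dvd f g : (l%:Z %| formL lam f g)%Z -> M f * M g = M (f + g).
Proof. by move=> l_dvd; rewrite MM exprz_prim_root_dvd // scale1r. Qed.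

Lemma frame_expr f n : M f ^+ n = M (n%:Z *: f).
Proof.
elim: n => [|n IHn]; first by rewrite expr0 scale0r M0.
rewrite exprSr IHn frame_mul_dvd; last by rewrite formLZl dvdz_mull ?formL_self_dvd.
by rewrite -{2}(scale1r f) -scalerDl -PoszD addn1.
Qed.

Lemma frame_mul_scale f g : M (l%:Z *: f) * M (l%:Z *: g) = M (l%:Z *: (f + g)).
Proof. by rewrite frame_mul_dvd ?scalerDr // formLZl formLZr dvdz_mulr ?dvdzz. Qed.

Lemma frame_prod_evec (P : pred 'I_N) (c : 'I_N -> nat) :
  \prod_(i < N | P i) (M (evec i) ^+ l) ^+ c i
    = M (l%:Z *: \sum_(i < N | P i) (c i)%:Z *: evec i).
Proof.
apply: (big_rec2 (fun x f => x = M (l%:Z *: f))); first by rewrite scaler0 M0.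
by move=> i _ f _ ->; rewrite !frame_expr scalerA mulrC -scalerA frame_mul_scale.
Qed.

Lemma frame_commute f g :
  M g * M f = q ^ (formL lam g f - formL lam f g) *: (M f * M g).
Proof. by rewrite !MM scalerA -expfzDr // subrK addrC. Qed.

Lemma frame_scale_expr (z : int) f : (q ^ z *: M f) ^+ l = M (l%:Z *: f).
Proof.
rewrite exprZn frame_expr exprnP exprz_exp exprz_prim_root_dvd ?scale1r //.
by rewrite dvdz_mull ?dvdzz.
Qed.

Section Mutation.

Variables (B : 'M[int]_N) (k : 'I_N) (dk : nat).
Hypotheses (Bkk : B k k = 0) (dk_coprime : coprime l dk).
Hypothesis B_compat :
  forall i, (l%:Z %| \sum_(m < N) B m k * lam m i - (i == k)%:R * dk%:Z)%Z.

Local Notation b := (bcol B k).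
Local Notation f := (- evec k + pos_part b).
Local Notation g := (- b).
Local Notation Z := (q ^ (- formL lam f g) *: M g).
Local Notation mut := (M f + M (- evec k - neg_part b)).

Lemma mut_mul1D : mut = M f * (1 + Z).
Proof.
rewrite mulrDr mulr1 -scalerAr MM scalerA -expfzDr // addNr expr0z scale1r.
by rewrite -[X in _ = _ + M (_ - X)](add_pos_neg_part b) opprD addrA addrK.
Qed.

Lemma mut_skew :
  Z * M f = q ^ (formL lam g f - formL lam f g) *: (M f * Z).
Proof. by rewrite -scalerAl -scalerAr frame_commute !scalerA mulrC. Qed.

(* f_k = -1 because b_k = B k k = 0, so the exponent is 2 dk modulo l. *)
Lemma prim_root_mut :
  l.-primitive_root (q ^ (formL lam g f - formL lam f g)).
Proof.
apply: (@prim_root_exprz _ (2 * dk));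
  last by rewrite coprimeMl coprime2n l_odd coprime_sym.
have f_k : f 0 k = -1 by rewrite !mxE Bkk lexx !eqxx addr0.
have := formL_bcol_dvd f B_compat; rewrite f_k => b_f.
rewrite formLNl formLNr opprK PoszM.
have -> : - formL lam b f + formL lam f b - 2%:Z * dk%:Z
  = (formL lam b f + formL lam f b) - (formL lam b f - dk%:Z * -1) * 2 by ring.
by rewrite rpredB ?formL_skew_dvd ?dvdz_mulr.
Qed.

Lemma mut_expr :
  M (evec k) ^+ l * mut ^+ l =
    \prod_(i < N | 0 < B i k) (M (evec i) ^+ l) ^+ `|B i k|%N
  + \prod_(i < N | B i k < 0) (M (evec i) ^+ l) ^+ `|B i k|%N.
Proof.
rewrite mut_mul1D (expr_mul1D_prim_root l_odd prim_root_mut mut_skew).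
rewrite frame_scale_expr !frame_expr mulrDr mulr1 mulrDr mulrA !frame_mul_scale.
rewrite !frame_prod_evec sum_evec_pos_part sum_evec_neg_part addrA subrr add0r.
by rewrite -[in X in _ - X](add_pos_neg_part b) opprD addrA subrr add0r.
Qed.

End Mutation.

End ToricFrame.

Lemma compatible_with_diag (l N : nat) (ex : {set 'I_N}) (lam B : 'M[int]_N)
    (d : 'I_N -> nat) k :
  compatible_with l ex lam B d -> k \in ex -> B k k = 0.
Proof.
case=> d_gt0 DB_skew _ k_ex; apply/eqP.
have /eqP := DB_skew k k k_ex k_ex; rewrite -addr_eq0 -mulr2n mulrn_eq0 /=.
by rewrite mulf_eq0 eqz_nat (negbTE (lt0n_neq0 (d_gt0 k k_ex))).
Qed.

Unset Implicit Arguments.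

Theorem proposition4p4
  (l : nat) (e : algC) (K : fieldType) (sigma : {rmorphism K -> algC}) (q : K)
  (F : unitAlgType K) (N : nat) (ex : {set 'I_N})
  (M : 'rV[int]_N -> F) (lam B : 'M[int]_N) (d : 'I_N -> nat) :
  (0 < l)%N ->
  l.-primitive_root e ->
  sigma q = e ->
  (forall x : K, exists p : {poly rat}, x = (map_poly ratr p).[q]) ->
  (forall x : F, x != 0 -> x \is a GRing.unit) ->
  toric_frame q l M lam ->
  compatible_with l ex lam B d ->
  coprime_cond l ex d ->
  forall k, k \in ex ->
    M (evec k) ^+ l * (mut_ek M B k) ^+ l =
      \prod_(i < N | 0 < B i k) (M (evec i) ^+ l) ^+ `|B i k|%N
    + \prod_(i < N | B i k < 0) (M (evec i) ^+ l) ^+ `|B i k|%N.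
Proof.
move=> _ e_prim sigma_q _ _ [lam_skew M0 MM _ _] compat [l_odd d_coprime] k k_ex.
have q_prim : l.-primitive_root q by rewrite -(fmorph_primitive_root sigma) sigma_q.
have Bkk := compatible_with_diag compat k_ex.
have [_ _ B_compat] := compat.
exact: (mut_expr q_prim l_odd lam_skew M0 MM Bkk (d_coprime k k_ex)
                 (fun i => B_compat i k k_ex)).
Qed.
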